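(* Let $H$ be a graph on $h$ vertices with $\chi(H)=r\geq 3$ and $\gcd(H)=1$. Then for every sufficiently large integer $n$ there exists a balanced $r$-partite graph $G$ on $rn$ vertices with $\delta^*(G)\geq\left(1-\frac{1}{\chi^*(H)}\right)n-1=\left(1-\frac{1}{\chi_{\rm cr}(H)}\right)n-1$ that has no perfect $H$-tiling.
   Context: An $H$-tiling in $G$ is a collection of vertex-disjoint copies of $H$ in $G$; it is perfect if it covers every vertex of $G$. For an $r$-partite graph $G$ with vertex classes $V_1,\dots,V_r$, $G$ is balanced if all classes have the same size, and $\delta^*(G)$ is the largest integer $m$ such that for all $i\neq j$ every vertex of $V_i$ has at least $m$ neighbours in $V_j$. For $H$ with $\chi(H)=r$, let $\mathcal C$ be the set of proper $r$-colourings of $H$ with colour classes $X_1^\phi,\dots,X_r^\phi$, and $\mathcal D(H)=\bigcup_{\phi\in\mathcal C}\{|X_i^\phi|-|X_j^\phi|: i,j\in[r]\}$; $\gcd(H)$ is the greatest common divisor of the elements of $\mathcal D(H)$ if $\mathcal D(H)\ne\{0\}$ and $\infty$ otherwise. $\sigma(H)=\min_{\phi\in\mathcal C,\,i\in[r]}|X_i^\phi|/|V(H)|$, $\chi_{\rm cr}(H)=(\chi(H)-1)/(1-\sigma(H))$, and $\chi^*(H)=\chi_{\rm cr}(H)$ when $\gcd(H)=1$. *)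

From HB Require Import structures.
From mathcomp Require Import all_boot all_order all_algebra.
Set Implicit Arguments. Unset Strict Implicit. Unset Printing Implicit Defensive.
Import Order.TTheory GRing.Theory Num.Theory.

Definition simple_graph (T : finType) (e : rel T) : Prop :=
  symmetric e /\ irreflexive e.

Definition proper_col (T : finType) (e : rel T) (k : nat) (f : T -> 'I_k) : bool :=
  [forall x, forall y, e x y ==> (f x != f y)].

Definition chromatic_number (T : finType) (e : rel T) (r : nat) : Prop :=
  (exists f : T -> 'I_r, proper_col e f) /\
  (forall k, k < r -> ~ exists f : T -> 'I_k, proper_col e f).

Definition colour_class (T : finType) (k : nat) (f : T -> 'I_k) (i : 'I_k) : {set T} :=
  [set x | f x == i].

(* gcd(H) = 1 : the only natural number dividing every element of D(H) is 1
   (if D(H) = {0}, gcd(H) = infinity and every d divides, so this fails). *)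
Definition gcd_one (T : finType) (e : rel T) (r : nat) : Prop :=
  forall d : nat,
    (forall f : {ffun T -> 'I_r}, proper_col e f ->
       forall i j : 'I_r,
         (d%:Z %| ((#|colour_class f i|%:Z - #|colour_class f j|%:Z)%R))%Z) ->
    d = 1%N.

(* min over proper r-colourings phi and colours i of |X_i^phi|
   (default #|T| is harmless: every class has size <= #|T|). *)
Definition min_class_size (T : finType) (e : rel T) (r : nat) : nat :=
  \big[minn/#|T|]_(f : {ffun T -> 'I_r} | proper_col e f)
     \big[minn/#|T|]_(i < r) #|colour_class f i|.

Definition sigma (T : finType) (e : rel T) (r : nat) : rat :=
  ((min_class_size e r)%:R / #|T|%:R)%R.

Definition chi_cr (T : finType) (e : rel T) (r : nat) : rat :=
  ((r%:R - 1) / (1 - sigma e r))%R.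

(* chi^*(H) = chi_cr(H) when gcd(H) = 1 (the only case used). *)
Definition chi_star (T : finType) (e : rel T) (r : nat) : rat := chi_cr e r.

Definition balanced_rpartite (r n : nat) (E : rel ('I_r * 'I_n)) : Prop :=
  simple_graph E /\ (forall x y, x.1 = y.1 -> ~~ E x y).

(* delta^*(G): min over vertices v and classes j <> class of v of the number of
   neighbours of v in V_j (default n is harmless: such degrees are <= n). *)
Definition delta_star (r n : nat) (E : rel ('I_r * 'I_n)) : nat :=
  \big[minn/n]_(v : 'I_r * 'I_n)
     \big[minn/n]_(j < r | j != v.1) #|[set u : 'I_r * 'I_n | (u.1 == j) && E v u]|.

Definition perfect_tiling (T : finType) (e : rel T) (U : finType) (E : rel U) : Prop :=
  exists (k : nat) (phi : 'I_k -> T -> U),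
    (forall i x y, e x y -> E (phi i x) (phi i y)) /\
    injective (fun p : 'I_k * T => phi p.1 p.2) /\
    (forall u : U, exists p : 'I_k * T, phi p.1 p.2 = u).

From HB Require Import structures.
From mathcomp Require Import all_boot all_order all_algebra.
From mathcomp Require Import zify ring lra.
Import Order.TTheory GRing.Theory Num.Theory.

Set Implicit Arguments.
Unset Strict Implicit.
Unset Printing Implicit Defensive.

(* Let [h = |V(H)|] and let [mu] be the size of the smallest
   colour class over all proper [r]-colourings of [H], so [1/chi_cr(H) =
   (h - mu) / ((r - 1) h)].  Colour each part [{0..n-1}] of [G] with [t]
   vertices of a special colour, where [t h < mu n <= (t + 1) h], and the
   remaining vertices cyclically with [r - 1] further colours; join vertices of
   different parts iff their colours differ.  A copy of [H] in [G] is properly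
   coloured, so it has at least [mu] special vertices, and a perfect tiling by
   its [r n / h] copies would need [mu r n / h > r t] special vertices.  A
   vertex misses, in each other part, only its own colour class, which has at
   most [(h - mu) n / ((r - 1) h) + 1] vertices. *)

Local Open Scope nat_scope.

Section BigMin.

Variables (I : finType) (d : nat) (P : pred I) (F : I -> nat).

Lemma bigmin_leq_cond i : P i -> \big[minn/d]_(j | P j) F j <= F i.
Proof.
move=> Pi; elim: (index_enum I) (mem_index_enum i) => // a s IH.
rewrite inE big_cons => /predU1P [<- | /IH le_s]; first by rewrite Pi geq_minl.
by case: (P a) => //; exact: leq_trans (geq_minr _ _) le_s.
Qed.

Lemma leq_bigmin_cond m :
  m <= d -> (forall j, P j -> m <= F j) -> m <= \big[minn/d]_(j | P j) F j.
Proof.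
by move=> le_md le_mF; apply: (big_ind (leq m)) => // x y; rewrite leq_min => ->.
Qed.

End BigMin.

Lemma card_le_bounded_inj (T : finType) (A : {set T}) (g : T -> nat) N :
  {in A &, injective g} -> (forall x, x \in A -> g x < N) -> #|A| <= N.
Proof.
move=> g_inj g_lt; rewrite cardE -(size_map g) -[N](size_iota 0).
apply: uniq_leq_size.
  by rewrite map_inj_in_uniq ?enum_uniq // => x y; rewrite !mem_enum; exact: g_inj.
by move=> _ /mapP [x xA ->]; rewrite mem_iota add0n g_lt // -mem_enum.
Qed.

Section ColourClasses.

Variables (T : finType) (e : rel T) (r : nat).

Local Notation mu := (min_class_size e r).

Lemma min_class_size_le (f : {ffun T -> 'I_r}) i :
  proper_col e f -> mu <= #|colour_class f i|.
Proof.
move=> f_proper; rewrite /min_class_size.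
pose P (g : {ffun T -> 'I_r}) := proper_col e g.
apply: leq_trans (@bigmin_leq_cond _ _ P _ f f_proper) _.
exact: bigmin_leq_cond.
Qed.

(* An empty class [i] would leave a proper colouring with the [r - 1] colours
   [unlift i]. *)
Lemma colour_class_gt0 (f : T -> 'I_r) i :
  chromatic_number e r -> 1 < r -> proper_col e f -> 0 < #|colour_class f i|.
Proof.
move=> [_ no_smaller] r_gt1 f_proper; rewrite lt0n; apply/negP => /eqP/cards0_eq.
move=> /setP class_i0.
have f_neq x : f x != i by have := class_i0 x; rewrite !inE => ->.
have j0 : 'I_r.-1 by exists 0; lia.
apply: (no_smaller r.-1); first lia.
exists (fun x => odflt j0 (unlift i (f x))).
apply/forallP => x; apply/forallP => y; apply/implyP => exy.
have := forallP (forallP f_proper x) y; move/implyP/(_ exy).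
case: unliftP (f_neq x) => [a -> _ | ->]; last by rewrite eqxx.
case: unliftP (f_neq y) => [b -> _ | ->]; last by rewrite eqxx.
by apply: contra => /eqP /= ->.
Qed.

Lemma min_class_size_gt0 : chromatic_number e r -> 1 < r -> 0 < mu.
Proof.
move=> chi_r r_gt1; have [[f f_proper] _] := chi_r.
have class_gt0 (g : T -> 'I_r) i : proper_col e g -> 0 < #|colour_class g i|.
  by move=> g_proper; exact: colour_class_gt0.
have T_gt0 : 0 < #|T|.
  exact: leq_trans (class_gt0 f (Ordinal r_gt1) f_proper) (max_card _).
rewrite /min_class_size; apply: leq_bigmin_cond => // g g_proper.
by apply: leq_bigmin_cond => // i _; exact: class_gt0.
Qed.

Lemma min_class_size_mul_le : chromatic_number e r -> mu * r <= #|T|.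
Proof.
move=> [[f f_proper] _]; pose F : {ffun T -> 'I_r} := [ffun x => f x].
have F_proper : proper_col e F.
  apply/forallP => x; apply/forallP => y; rewrite !ffunE.
  exact: (forallP (forallP f_proper x) y).
have -> : #|T| = \sum_(i < r) #|colour_class F i|.
  rewrite -sum1_card (partition_big F xpredT) //=; apply: eq_bigr => i _.
  by rewrite -sum1_card; apply: eq_bigl => x; rewrite inE.
have <- : \sum_(i < r) mu = mu * r by rewrite sum_nat_const card_ord mulnC.
by apply: leq_sum => i _; exact: min_class_size_le.
Qed.

Lemma inv_chi_cr : 0 < r -> 0 < #|T| ->
  (1 / chi_cr e r = (#|T|%:R - mu%:R) / (r.-1%:R * #|T|%:R) :> rat)%R.
Proof.
move=> r_gt0 T_gt0.
have T_neq0 : (#|T|%:R != 0 :> rat)%R by rewrite pnatr_eq0 -lt0n.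
rewrite /chi_cr /sigma div1r invf_div.
rewrite -[in (r%:R - 1)%R](prednK r_gt0) -natr1 addrK.
by rewrite invfM mulrA mulrAC; congr (_ / _)%R; field.
Qed.

End ColourClasses.

Section SpaceBarrier.

Variables (s n t : nat).

Definition barrier_col (p : 'I_n) : 'I_s.+2 :=
  if p < t then ord_max else inord ((p - t) %% s.+1).

Lemma barrier_col_max p : (barrier_col p == ord_max) = (p < t).
Proof.
rewrite /barrier_col; case: ltnP => [_ | _]; first by rewrite eqxx.
rewrite -(inj_eq val_inj) /= inordK; last by rewrite ltnS ltnW // ltn_mod.
by apply/negbTE; rewrite neq_ltn ltn_mod.
Qed.

Lemma barrier_colP p (a : 'I_s.+2) : a != ord_max -> barrier_col p == a ->
  t <= p /\ (p - t) %% s.+1 = a.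
Proof.
rewrite /barrier_col => a_neq; case: ltnP => [_ /eqP a_max | le_tp /eqP <-].
  by rewrite -a_max eqxx in a_neq.
by rewrite inordK // ltnS ltnW // ltn_mod.
Qed.

Lemma card_barrier_max : #|[set p | barrier_col p == ord_max]| <= t.
Proof.
apply: (@card_le_bounded_inj _ _ val) => [x y _ _ /val_inj // | x].
by rewrite inE barrier_col_max.
Qed.

Lemma card_barrier_class a : a != ord_max ->
  #|[set p | barrier_col p == a]| * s.+1 <= n.-1 - t + s.+1.
Proof.
move=> a_neq; set D := (n.-1 - t) %/ s.+1.
have card_le : #|[set p | barrier_col p == a]| <= D.+1.
  apply: (@card_le_bounded_inj _ _ (fun p : 'I_n => (p - t) %/ s.+1)) => [x y | x].
    rewrite !inE => /(barrier_colP a_neq) [le_tx mod_x].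
    move=> /(barrier_colP a_neq) [le_ty mod_y] div_xy; apply: val_inj => /=.
    have : x - t = y - t.
      by rewrite (divn_eq (x - t) s.+1) (divn_eq (y - t) s.+1) div_xy mod_x mod_y.
    lia.
  by move=> _; rewrite ltnS leq_div2r //; have := ltn_ord x; lia.
apply: leq_trans (leq_mul card_le (leqnn _)) _.
by rewrite mulSn addnC leq_add2r leq_divM.
Qed.

Lemma barrier_class_bound h mu a :
  t * h < mu * n -> mu * n <= t.+1 * h -> mu * s.+2 <= h ->
  #|[set p | barrier_col p == a]| * s.+1 * h <= (h - mu) * n + s.+1 * h.
Proof.
move=> lt_th le_th le_mu; have [-> | a_neq] := eqVneq a ord_max.
  have := card_barrier_max; nia.
have := card_barrier_class a_neq; nia.
Qed.

End SpaceBarrier.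

Lemma leq_delta_star r n (E : rel ('I_r * 'I_n)) m : m <= n ->
  (forall v j, j != v.1 -> m <= #|[set u | (u.1 == j) && E v u]|) ->
  m <= delta_star E.
Proof.
move=> le_mn le_deg; apply: leq_bigmin_cond => // v _.
by apply: leq_bigmin_cond => // j; exact: le_deg.
Qed.

Lemma no_perfect_tiling_small_class (T U : finType) (e : rel T) (E : rel U) k
    (c : U -> 'I_k) i :
  (forall u v, E u v -> c u != c v) ->
  #|[set u | c u == i]| * #|T| < min_class_size e k * #|U| ->
  ~ perfect_tiling e E.
Proof.
move=> c_proper small [m [phi [phi_hom [phi_inj phi_surj]]]].
pose F (p : 'I_m * T) := phi p.1 p.2.
pose S := [set p : 'I_m * T | c (F p) == i].
have le_U : #|U| <= m * #|T|.
  have F_surj u : exists p, F p == u by have [p <-] := phi_surj u; exists p.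
  rewrite -[m]card_ord -card_prod.
  apply: (@leq_card _ _ (fun u => xchoose (F_surj u))) => u v /(congr1 F).
  by rewrite !(eqP (xchooseP (F_surj _))).
have le_S : #|S| <= #|[set u | c u == i]|.
  rewrite -(card_imset _ phi_inj); apply: subset_leq_card.
  by apply/subsetP => _ /imsetP [p p_S ->]; rewrite inE; rewrite inE in p_S.
pose f (x : 'I_m) : {ffun T -> 'I_k} := [ffun y => c (phi x y)].
have f_proper x : proper_col e (f x).
  apply/forallP => y; apply/forallP => z; apply/implyP => e_yz.
  by rewrite !ffunE; apply: c_proper; exact: phi_hom.
have ge_S : m * min_class_size e k <= #|S|.
  have -> : #|S| = \sum_(x < m) #|colour_class (f x) i|.
    rewrite -sum1_card big_mkcond /=.
    under [RHS]eq_bigr => x _ do rewrite -sum1_card big_mkcond /=.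
    rewrite pair_big /=; apply: eq_bigr => -[x y] _ /=.
    by rewrite /colour_class !inE ffunE.
  rewrite -[m in m * _]card_ord -sum_nat_const.
  by apply: leq_sum => x _; exact: min_class_size_le.
move: small; rewrite ltnNge => /negP; apply.
apply: leq_trans (leq_mul (leqnn _) le_U) _.
by rewrite mulnA [_ * m]mulnC leq_mul2r (leq_trans ge_S le_S) orbT.
Qed.

Section ClassGraph.

Variables (r n k : nat) (c : 'I_n -> 'I_k).

Definition class_graph : rel ('I_r * 'I_n) :=
  fun u v => (u.1 != v.1) && (c u.2 != c v.2).

Lemma class_graph_balanced : balanced_rpartite class_graph.
Proof.
split; last by move=> u v uv_part; rewrite /class_graph uv_part eqxx.
split; last by move=> u; rewrite /class_graph eqxx.
by move=> u v; rewrite /class_graph eq_sym (eq_sym (c u.2)).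
Qed.

Lemma class_graph_delta_star :
  n - \max_a #|[set p | c p == a]| <= delta_star class_graph.
Proof.
apply: leq_delta_star => [|v j j_neq]; first exact: leq_subr.
set A := [set p | c p == c v.2].
have A_le : #|A| <= \max_a #|[set p | c p == a]| by apply: leq_bigmax.
apply: leq_trans (leq_sub2l n A_le) _.
have -> : n - #|A| = #|~: A| by rewrite -[n in n - _]card_ord -(cardsC A) addKn.
rewrite -(card_imset _ (f := fun p => (j, p))); last by move=> x y [].
apply: subset_leq_card; apply/subsetP => _ /imsetP [p p_A ->].
by rewrite !inE /class_graph /= eqxx eq_sym j_neq eq_sym; rewrite !inE in p_A.
Qed.

Lemma class_graph_no_perfect_tiling (T : finType) (e : rel T) i : 0 < r ->
  #|[set p | c p == i]| * #|T| < min_class_size e k * n ->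
  ~ perfect_tiling e class_graph.
Proof.
move=> r_gt0 small.
apply: (@no_perfect_tiling_small_class _ _ _ _ _ (fun u => c u.2) i).
  by move=> u v /andP [].
have -> : [set u : 'I_r * 'I_n | c u.2 == i] = setX setT [set p | c p == i].
  by apply/setP => -[x p]; rewrite !inE.
by rewrite cardsX cardsT card_prod !card_ord -mulnA [_ * (r * n)]mulnCA ltn_pmul2l.
Qed.

End ClassGraph.

Lemma barrier_degree_ge (s n c h mu : nat) : 0 < h -> mu <= h -> c <= n ->
  c * s.+1 * h <= (h - mu) * n + s.+1 * h ->
  ((1 - (h%:R - mu%:R) / (s.+1%:R * h%:R)) * n%:R - 1 <= (n - c)%:R :> rat)%R.
Proof.
move=> h_gt0 le_mu_h le_cn le_c.
set Y : rat := (s.+1%:R * h%:R)%R.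
have Y_gt0 : (0 < Y)%R by rewrite /Y -natrM ltr0n muln_gt0.
have le_cY : (c%:R * Y <= (h%:R - mu%:R) * n%:R + Y :> rat)%R.
  by rewrite /Y -natrB // mulrA -!natrM -natrD ler_nat.
have le_c_div : (c%:R <= (h%:R - mu%:R) * n%:R / Y + 1 :> rat)%R.
  by rewrite -[X in (_ + X)%R](divff (lt0r_neq0 Y_gt0)) -mulrDl ler_pdivlMr.
by rewrite natrB // mulrBl mul1r mulrAC; lra.
Qed.

Theorem mainTheorem9 (T : finType) (e : rel T) (r : nat) :
  simple_graph e -> chromatic_number e r -> 3 <= r -> gcd_one e r ->
  exists n0 : nat, forall n : nat, n0 <= n ->
    exists E : rel ('I_r * 'I_n),
      balanced_rpartite E /\
      ((delta_star E)%:R >= (1 - 1 / chi_star e r) * n%:R - 1 :> rat)%R /\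
      ~ perfect_tiling e E.
Proof.
move=> _ + r_ge3 _; case: r r_ge3 => [|[|s]] // _ chi_r.
set h := #|T|; set mu := min_class_size e s.+2.
have mu_gt0 : 0 < mu := min_class_size_gt0 chi_r isT.
have le_mu_h : mu * s.+2 <= h := min_class_size_mul_le chi_r.
have h_gt0 : 0 < h by apply: leq_trans le_mu_h; rewrite muln_gt0 mu_gt0.
exists 1 => n n_gt0; pose t := (mu * n).-1 %/ h.
have mun_gt0 : 0 < mu * n by rewrite muln_gt0 mu_gt0.
have lt_th : t * h < mu * n by have := leq_divM (mu * n).-1 h; lia.
have le_th : mu * n <= t.+1 * h by have := ltn_ceil (mu * n).-1 h_gt0; lia.
pose class a := [set p : 'I_n | barrier_col s t p == a].
exists (class_graph (barrier_col s t)); split; first exact: class_graph_balanced.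
split.
  have ord_gt0 : 0 < #|'I_s.+2| by rewrite card_ord.
  have [a max_a] := bigop.eq_bigmax (fun b : 'I_s.+2 => #|class b|) ord_gt0.
  rewrite /chi_star inv_chi_cr //=.
  apply: le_trans (_ : _ <= (n - #|class a|)%:R)%R _.
    apply: barrier_degree_ge => //; first by apply: leq_trans le_mu_h; exact: leq_pmulr.
      by rewrite -[n in _ <= n]card_ord max_card.
    exact: barrier_class_bound.
  by rewrite ler_nat -max_a class_graph_delta_star.
apply: (@class_graph_no_perfect_tiling _ _ _ _ _ _ ord_max) => //.
by apply: leq_ltn_trans lt_th; rewrite leq_mul2r card_barrier_max orbT.
Qed.
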